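(* Let $n\ge 2$, let $A\in\mathbb{R}^{n\times n}$ be symmetric positive definite, $B=A^{1/2}$, $E=\{x: x^{\top}A^{-1}x=1\}$, fix $x_0$ with $x_0^{\top}A^{-1}x_0=1$ and set $y_0=B^{-1}x_0\in S^{n-1}$. For every parallelepiped $P$ inscribed in $E$ having $x_0$ as a vertex, \[ L(P)\le 2^n\sqrt{\operatorname{tr}(A)}. \] Moreover, write the edge vectors of $P$, with signs chosen so that $x_0=\tfrac12\sum_i v_i$, as $v_i=\lambda_iBu_i$ with $\lambda_i>0$ and $U=[u_1\ \cdots\ u_n]\in O(n)$. Then equality holds if and only if, writing $z:=U^{\top}y_0$, \[ \operatorname{diag}\big(U^{\top}AU\big)=\operatorname{tr}(A)\,z\odot z\quad\text{and}\quad \lambda_i=2z_i\ (i=1,\dots,n). \]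
   Context: A (centred, $n$-dimensional) parallelepiped with linearly independent edge vectors $v_1,\dots,v_n$ is $P=\{\sum_i t_iv_i:|t_i|\le\tfrac12\}$ with vertices $\tfrac12\sum_i\varepsilon_iv_i$, $\varepsilon\in\{\pm1\}^n$; it is inscribed in $E$ if all vertices satisfy $x^{\top}A^{-1}x=1$. For such inscribed $P$, the vectors $B^{-1}v_i$ are pairwise orthogonal, so they can be written as $\lambda_iu_i$ with $U\in O(n)$, $\lambda_i=\|B^{-1}v_i\|$. $L(P)=2^{n-1}\sum_i\|v_i\|$ is the total edge length. $\odot$ is the componentwise (Hadamard) product and $\operatorname{diag}(M)$ the vector of diagonal entries of $M$. *)

(* Reals are modelled by an arbitrary real closed field R
   (the statement is purely algebraic; R = the reals is an instance). *)
From HB Require Import structures.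
From mathcomp Require Import all_boot all_order all_algebra.
Set Implicit Arguments. Unset Strict Implicit. Unset Printing Implicit Defensive.
Import Order.TTheory GRing.Theory Num.Theory.
Local Open Scope ring_scope.

Section Defs.
Variables (R : rcfType) (n : nat).

Definition qform (M : 'M[R]_n) (x : 'cV[R]_n) : R := (x^T *m M *m x) 0 0.

Definition spd (M : 'M[R]_n) : Prop :=
  M^T = M /\ forall x : 'cV[R]_n, x != 0 -> 0 < qform M x.

Definition vnorm (x : 'cV[R]_n) : R := Num.sqrt (\sum_i x i 0 ^+ 2).

Definition orthogonal_mx (U : 'M[R]_n) : Prop := U^T *m U = 1%:M.

(* The parallelepiped with edge vectors v_i = col i V has vertices
   1/2 * sum_i eps_i v_i, eps_i = (-1)^(e i). *)
Definition vertex (V : 'M[R]_n) (e : 'I_n -> bool) : 'cV[R]_n :=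
  2^-1 *: \sum_i ((-1) ^+ e i) *: col i V.

Definition inscribed (A V : 'M[R]_n) : Prop :=
  forall e : 'I_n -> bool, qform (invmx A) (vertex V e) = 1.

Definition edge_length (V : 'M[R]_n) : R :=
  2 ^+ n.-1 * \sum_i vnorm (col i V).

End Defs.

From HB Require Import structures.
From mathcomp Require Import all_boot all_order all_algebra.
From mathcomp Require Import ring lra.
Import Order.TTheory GRing.Theory Num.Theory.
Set Implicit Arguments. Unset Strict Implicit. Unset Printing Implicit Defensive.
Local Open Scope ring_scope.

(* Put W = B^-1 V.  Inscription says that the quadratic form of the Gram
   matrix W^T W equals 4 at every sign vector; its second differences along
   two coordinate flips then vanish, so the columns of W are orthogonal and
   their squared lengths l_i^2 sum to 4.  Normalising them yields U in O(n)
   with v_i = l_i B u_i, and sum_i |B u_i|^2 = tr (U^T A U) = tr A.  Hence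
   L(P) = 2^(n-1) sum_i l_i |B u_i| <= 2^(n-1) * 2 sqrt (tr A) by
   Cauchy-Schwarz, with equality iff |B u_i| = sqrt (tr A) l_i / 2; and
   U^T B^-1 x0 = l / 2 identifies l_i / 2 with z_i. *)

Lemma mulmx_sum_col (R : comRingType) m p (V : 'M[R]_(m, p)) (x : 'cV[R]_p) :
  V *m x = \sum_i x i 0 *: col i V.
Proof.
apply/matrixP => a b; rewrite summxE !mxE; apply: eq_bigr => i _.
by rewrite !mxE (ord1 b) mulrC.
Qed.

Lemma cauchy_schwarz_sum (R : realFieldType) (I : finType) (l s : I -> R) (a b : R) :
  0 < a -> 0 < b -> \sum_i l i ^+ 2 = a ^+ 2 -> \sum_i s i ^+ 2 = b ^+ 2 ->
  \sum_i l i * s i <= a * b /\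
  (\sum_i l i * s i = a * b <-> forall i, s i = b / a * l i).
Proof.
move=> a_gt0 b_gt0 l2 s2.
have ab_gt0 : 0 < 2 * a * b by rewrite !mulr_gt0.
have gap : \sum_i (b * l i - a * s i) ^+ 2 = 2 * a * b * (a * b - \sum_i l i * s i).
  transitivity (b ^+ 2 * \sum_i l i ^+ 2 - 2 * a * b * \sum_i l i * s i
                + a ^+ 2 * \sum_i s i ^+ 2).
    rewrite !mulr_sumr -sumrB -big_split; apply: eq_bigr => i _ /=; ring.
  by rewrite l2 s2; ring.
have gap_ge0 : 0 <= a * b - \sum_i l i * s i.
  by rewrite -(pmulr_rge0 _ ab_gt0) -gap; apply: sumr_ge0 => i _; exact: sqr_ge0.
split; first by rewrite -subr_ge0.
have a_neq0 : a != 0 by rewrite gt_eqF.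
split=> [eq_ab i | eq_s].
  have sum0 : \sum_i (b * l i - a * s i) ^+ 2 = 0 by rewrite gap eq_ab subrr mulr0.
  have /eqP := psumr_eq0P (fun j _ => sqr_ge0 _) sum0 (i := i) isT.
  rewrite sqrf_eq0 subr_eq0 => /eqP bl_as.
  by rewrite mulrAC bl_as mulrAC divff // mul1r.
have : 2 * a * b * (a * b - \sum_i l i * s i) = 0.
  by rewrite -gap big1 // => i _; rewrite eq_s mulrA mulrCA divff // mulr1 subrr expr0n.
by move/eqP; rewrite mulf_eq0 gt_eqF //= subr_eq0 => /eqP.
Qed.

Section QuadraticForms.
Variables (R : rcfType) (n : nat).
Implicit Types (M V : 'M[R]_n) (x y : 'cV[R]_n).

Definition bform M x y : R := (x^T *m M *m y) 0 0.

Lemma qformE M x : qform M x = bform M x x. Proof. by []. Qed.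

Lemma bformDl M x y z : bform M (x + y) z = bform M x z + bform M y z.
Proof. by rewrite /bform linearD /= !mulmxDl mxE. Qed.

Lemma bformDr M x y z : bform M x (y + z) = bform M x y + bform M x z.
Proof. by rewrite /bform mulmxDr mxE. Qed.

Lemma bformZl M c x y : bform M (c *: x) y = c * bform M x y.
Proof. by rewrite /bform linearZ /= -!scalemxAl mxE. Qed.

Lemma bformZr M c x y : bform M x (c *: y) = c * bform M x y.
Proof. by rewrite /bform -scalemxAr mxE. Qed.

Lemma bformC M x y : M^T = M -> bform M x y = bform M y x.
Proof.
move=> M_sym; transitivity ((x^T *m M *m y)^T 0 0); first by rewrite mxE.
by rewrite !trmx_mul trmxK M_sym mulmxA.
Qed.

Lemma bform_delta M i j : bform M (delta_mx i 0) (delta_mx j 0) = M i j.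
Proof. by rewrite /bform trmx_delta -rowE -colE !mxE. Qed.

Lemma qformZ M c x : qform M (c *: x) = c ^+ 2 * qform M x.
Proof. by rewrite !qformE bformZl bformZr mulrA expr2. Qed.

Lemma qform_mulmx M V x : qform M (V *m x) = qform (V^T *m M *m V) x.
Proof. by rewrite /qform trmx_mul !mulmxA. Qed.

Lemma qform_second_diff M x a b : M^T = M ->
  qform M (x + a + b) - qform M (x + a) - qform M (x + b) + qform M x =
  2 * bform M a b.
Proof.
by move=> M_sym; rewrite !qformE !(bformDl, bformDr) (bformC b a) //; ring.
Qed.

Lemma qform_diag M x : (forall i j, i != j -> M i j = 0) ->
  qform M x = \sum_i M i i * x i 0 ^+ 2.
Proof.
move=> M_diag; rewrite /qform mxE; apply: eq_bigr => i _.
rewrite mxE (bigD1 i) //= big1 => [|j ji]; last by rewrite M_diag ?mulr0.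
by rewrite addr0 mxE; ring.
Qed.

End QuadraticForms.

Section SignVectors.
Variables (R : rcfType) (n : nat).
Implicit Types (M V : 'M[R]_n) (e : 'I_n -> bool).

Definition sign_vec e : 'cV[R]_n := \col_k (-1) ^+ e k.

Lemma sign_vec_flip e i : ~~ e i ->
  sign_vec (fun k => e k || (k == i)) = sign_vec e + (-2) *: delta_mx i 0.
Proof.
move=> /negbTE ei; apply/matrixP => k c; rewrite !mxE (ord1 c) eqxx andbT.
by case: eqP => [->|_]; rewrite ?ei ?orbF ?orbT /=; lra.
Qed.

Lemma vertexE V e : vertex V e = 2^-1 *: (V *m sign_vec e).
Proof.
by rewrite /vertex mulmx_sum_col; congr (_ *: _); apply: eq_bigr => i _; rewrite mxE.
Qed.

Lemma qform_sign_vec_const_offdiag M c : M^T = M ->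
  (forall e, qform M (sign_vec e) = c) -> forall i j, i != j -> M i j = 0.
Proof.
move=> M_sym qM_const i j ij.
have := qform_second_diff (sign_vec xpred0) ((-2) *: delta_mx i 0)
  ((-2) *: delta_mx j 0) M_sym.
rewrite -!sign_vec_flip ?(eq_sym j) // !qM_const bformZl bformZr bform_delta.
lra.
Qed.

Lemma qform_sign_vec_diag M e : (forall i j, i != j -> M i j = 0) ->
  qform M (sign_vec e) = \tr M.
Proof.
move=> M_diag; rewrite qform_diag //; apply: eq_bigr => i _.
by rewrite mxE sqrr_sign mulr1.
Qed.

End SignVectors.
Arguments sign_vec {R n} e.

Section EuclideanFrames.
Variables (R : rcfType) (n : nat).
Implicit Types (X U W : 'M[R]_n) (x : 'cV[R]_n).

Lemma vnorm_sq x : vnorm x ^+ 2 = (x^T *m x) 0 0.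
Proof.
rewrite sqr_sqrtr; last by apply: sumr_ge0 => i _; exact: sqr_ge0.
by rewrite mxE; apply: eq_bigr => i _; rewrite mxE expr2.
Qed.

Lemma vnormZ c x : 0 <= c -> vnorm (c *: x) = c * vnorm x.
Proof.
move=> c_ge0; rewrite /vnorm -[c in RHS]ger0_norm // -sqrtr_sqr -sqrtrM ?sqr_ge0 //.
by rewrite mulr_sumr; congr Num.sqrt; apply: eq_bigr => i _; rewrite mxE exprMn.
Qed.

Lemma tr_col_mul_col p q (X : 'M[R]_(n, p)) (Y : 'M[R]_(n, q)) i j :
  ((col i X)^T *m col j Y) 0 0 = (X^T *m Y) i j.
Proof. by rewrite !mxE; apply: eq_bigr => k _; rewrite !mxE. Qed.

Lemma vnorm_col_sq p (X : 'M[R]_(n, p)) i : vnorm (col i X) ^+ 2 = (X^T *m X) i i.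
Proof. by rewrite vnorm_sq tr_col_mul_col. Qed.

Lemma vnorm_eq0 x : (vnorm x == 0) = (x == 0).
Proof.
have sumsq_ge0 : 0 <= \sum_i x i 0 ^+ 2 by apply: sumr_ge0 => i _; exact: sqr_ge0.
rewrite /vnorm sqrtr_eq0 le_eqVlt ltNge sumsq_ge0 orbF psumr_eq0 => [|i _];
  last exact: sqr_ge0.
apply/idP/eqP => [/allP x_eq0|->].
  apply/matrixP => i j; rewrite (ord1 j) mxE; apply/eqP.
  by rewrite -sqrf_eq0; exact: x_eq0 _ (mem_index_enum i).
by apply/allP => i _ /=; rewrite mxE expr0n.
Qed.

Lemma orthogonal_mx_vnorm_col U i : orthogonal_mx U -> vnorm (col i U) = 1.
Proof.
move=> U_orth; apply/eqP; rewrite -(@eqrXn2 _ 2) ?sqrtr_ge0 //.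
by rewrite vnorm_col_sq U_orth mxE eqxx expr1n.
Qed.

Lemma mxtrace_orthogonal_conj U X : orthogonal_mx U -> \tr (U^T *m X *m U) = \tr X.
Proof. by move=> U_orth; rewrite mxtrace_mulC mulmxA (mulmx1C U_orth) mul1mx. Qed.

Lemma unitmx_col_neq0 X i : X \in unitmx -> col i X != 0.
Proof.
move=> X_unit; apply/eqP => /(congr1 (mulmx (invmx X))).
rewrite colE mulmxA mulVmx // mul1mx mulmx0 => /matrixP /(_ i 0).
by rewrite !mxE !eqxx; apply/eqP; exact: oner_neq0.
Qed.

Lemma orthogonal_cols_normalize W :
  (forall i j, i != j -> (W^T *m W) i j = 0) -> (forall i, col i W != 0) ->
  exists2 Q, orthogonal_mx Q & forall i, col i W = vnorm (col i W) *: col i Q.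
Proof.
move=> W_orth W_col_neq0; set d := fun i => vnorm (col i W).
have d_neq0 i : d i != 0 by rewrite vnorm_eq0.
exists (\matrix_(k, i) (W k i / d i)); last first.
  by move=> i; apply/matrixP => k c; rewrite !mxE mulrCA divff ?mulr1 ?d_neq0.
apply/matrixP => i j; rewrite mxE.
transitivity ((W^T *m W) i j / (d i * d j)).
  rewrite mxE mulr_suml; apply: eq_bigr => k _; rewrite !mxE.
  by rewrite mulrACA invfM.
have [<-|ij] := eqVneq i j; last first.
  by rewrite (W_orth _ _ ij) mul0r mxE (negbTE ij).
rewrite -(vnorm_col_sq W) expr2 divff ?mxE ?eqxx //.
exact: mulf_neq0 (d_neq0 i) (d_neq0 i).
Qed.

End EuclideanFrames.

Section PositiveDefinite.
Variables (R : rcfType) (n : nat).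
Implicit Types M : 'M[R]_n.

Lemma spd_unitmx M : spd M -> M \in unitmx.
Proof.
move=> [_ M_pos]; rewrite -row_free_unit; apply/inj_row_free => v vM0.
apply/eqP; apply: contraT => v_neq0.
have := M_pos v^T; rewrite trmx_eq0 => /(_ v_neq0).
by rewrite /qform trmxK vM0 mul0mx mxE ltxx.
Qed.

Lemma spd_tr_gt0 M : (0 < n)%N -> spd M -> 0 < \tr M.
Proof.
move=> n_gt0 [_ M_pos].
have M_diag_gt0 i : 0 < M i i.
  rewrite -bform_delta -qformE M_pos //; apply/eqP => /matrixP /(_ i 0).
  by rewrite !mxE !eqxx; apply/eqP; exact: oner_neq0.
rewrite /mxtrace (bigD1 (Ordinal n_gt0)) //= ltr_wpDr //.
by apply: sumr_ge0 => i _; exact: ltW.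
Qed.

End PositiveDefinite.

Section SquareRoot.
Variables (R : rcfType) (n : nat) (A B : 'M[R]_n).
Hypotheses (B_spd : spd B) (B_sq : B *m B = A).
Implicit Types U V : 'M[R]_n.

Let B_sym : B^T = B. Proof. by case: B_spd. Qed.
Let B_unit : B \in unitmx. Proof. exact: spd_unitmx. Qed.

Lemma invmx_sqrt_sq : invmx A = invmx B *m invmx B.
Proof.
have A_unit : A \in unitmx by rewrite -B_sq unitmx_mul B_unit.
have -> : invmx B *m invmx B = invmx B *m invmx B *m A *m invmx A.
  by rewrite -mulmxA mulmxV // mulmx1.
by rewrite -B_sq mulmxA -(mulmxA (invmx B)) mulVmx // mulmx1 mulVmx // mul1mx.
Qed.

Lemma gram_invmx V :
  V^T *m invmx A *m V = (invmx B *m V)^T *m (invmx B *m V).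
Proof. by rewrite trmx_mul trmx_inv B_sym invmx_sqrt_sq !mulmxA. Qed.

Lemma vnorm_sqrt_mul_col_sq U i : vnorm (B *m col i U) ^+ 2 = (U^T *m A *m U) i i.
Proof.
by rewrite colE mulmxA -colE vnorm_col_sq trmx_mul B_sym -B_sq !mulmxA.
Qed.

Lemma inscribed_gram V (W := invmx B *m V) : inscribed A V ->
  (forall i j, i != j -> (W^T *m W) i j = 0) /\ \tr (W^T *m W) = 4.
Proof.
move=> V_ins.
have W_sign e : qform (W^T *m W) (sign_vec e) = 4.
  have := V_ins e; rewrite vertexE qformZ qform_mulmx gram_invmx -/W.
  rewrite expr2; lra.
have W_sym : (W^T *m W)^T = W^T *m W by rewrite trmx_mul trmxK.
have W_offdiag := qform_sign_vec_const_offdiag W_sym W_sign.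
by split=> //; rewrite -(qform_sign_vec_diag xpred0 W_offdiag).
Qed.

Lemma edge_length_frame_bound V U (l : 'I_n -> R) :
  (0 < n)%N -> 0 < \tr A -> orthogonal_mx U -> (forall i, 0 <= l i) ->
  \sum_i l i ^+ 2 = 4 -> (forall i, col i V = l i *: (B *m col i U)) ->
  edge_length V <= 2 ^+ n * Num.sqrt (\tr A) /\
  (edge_length V = 2 ^+ n * Num.sqrt (\tr A) <->
   forall i, (U^T *m A *m U) i i = \tr A * (l i / 2) ^+ 2).
Proof.
move=> n_gt0 trA_gt0 U_orth l_ge0 l_sq V_col.
pose s i := vnorm (B *m col i U).
have s_sq i : s i ^+ 2 = (U^T *m A *m U) i i by exact: vnorm_sqrt_mul_col_sq.
have s_sum : \sum_i s i ^+ 2 = Num.sqrt (\tr A) ^+ 2.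
  rewrite sqr_sqrtr ?ltW // -(mxtrace_orthogonal_conj A U_orth).
  by apply: eq_bigr => i _; rewrite s_sq.
have l_sum : \sum_i l i ^+ 2 = 2 ^+ 2 by rewrite l_sq expr2 -natrM.
have sqrt_gt0 : 0 < Num.sqrt (\tr A) by rewrite sqrtr_gt0.
have [CS_le CS_eq] := cauchy_schwarz_sum (ltr0n _ 2) sqrt_gt0 l_sum s_sum.
have EL : edge_length V = 2 ^+ n.-1 * \sum_i l i * s i.
  by rewrite /edge_length; congr (_ * _); apply: eq_bigr => i _; rewrite V_col vnormZ.
have pow_neq0 : (2 : R) ^+ n.-1 != 0 by rewrite expf_neq0 // pnatr_eq0.
have pow2 : 2 ^+ n = 2 ^+ n.-1 * 2 :> R by rewrite -exprSr prednK.
rewrite EL pow2 -mulrA ler_wpM2l ?exprn_ge0 //; split=> //.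
transitivity (\sum_i l i * s i = 2 * Num.sqrt (\tr A)).
  by split=> [/(mulfI pow_neq0)|->].
rewrite CS_eq; split=> s_eq i.
  by rewrite -s_sq s_eq !exprMn sqr_sqrtr ?ltW //; ring.
apply/eqP; rewrite -(@eqrXn2 _ 2) ?mulr_ge0 ?invr_ge0 ?sqrtr_ge0 //.
by rewrite s_sq s_eq !exprMn sqr_sqrtr ?ltW //; apply/eqP; ring.
Qed.

Lemma inscribed_frame V : row_free V^T -> inscribed A V ->
  exists U (l : 'I_n -> R), [/\ orthogonal_mx U, forall i, 0 <= l i,
    \sum_i l i ^+ 2 = 4 & forall i, col i V = l i *: (B *m col i U)].
Proof.
move=> V_free V_ins; have [W_offdiag W_tr] := inscribed_gram V_ins.
set W := invmx B *m V in W_offdiag W_tr.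
have W_unit : W \in unitmx.
  by rewrite unitmx_mul unitmx_inv B_unit -unitmx_tr -row_free_unit.
have [Q Q_orth W_col] := orthogonal_cols_normalize W_offdiag
  (fun i => unitmx_col_neq0 i W_unit).
exists Q, (fun i => vnorm (col i W)); split=> [//|i||i].
- exact: sqrtr_ge0.
- by rewrite -W_tr; apply: eq_bigr => i _; rewrite vnorm_col_sq.
have -> : col i V = B *m col i W by rewrite /W !colE !mulmxA mulmxV // mul1mx.
by rewrite scalemxAr -W_col.
Qed.

Lemma inscribed_frame_sum_sq V U (l : 'I_n -> R) :
  inscribed A V -> orthogonal_mx U -> (forall i, 0 <= l i) ->
  (forall i, col i V = l i *: (B *m col i U)) -> \sum_i l i ^+ 2 = 4.
Proof.
move=> V_ins U_orth l_ge0 V_col; have [_ <-] := inscribed_gram V_ins.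
apply: eq_bigr => i _; rewrite -vnorm_col_sq colE -mulmxA -colE V_col -scalemxAr.
by rewrite mulmxA mulVmx // mul1mx vnormZ // orthogonal_mx_vnorm_col ?mulr1.
Qed.

Lemma frame_coords_half_sum V U (l : 'I_n -> R) :
  orthogonal_mx U -> (forall i, col i V = l i *: (B *m col i U)) ->
  U^T *m (invmx B *m (2^-1 *: \sum_i col i V)) = 2^-1 *: \col_i l i.
Proof.
move=> U_orth V_col.
have -> : \sum_i col i V = B *m (U *m \col_i l i).
  rewrite mulmxA mulmx_sum_col; apply: eq_bigr => i _.
  by rewrite V_col mxE colE mulmxA -colE.
by rewrite -!scalemxAr (mulmxA (invmx B)) mulVmx // mul1mx mulmxA U_orth mul1mx.
Qed.

End SquareRoot.

Theorem proposition3p3 (R : rcfType) (n : nat) (A B : 'M[R]_n) (x0 : 'cV[R]_n) :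
  (2 <= n)%N ->
  spd A ->
  (* B = A^{1/2}: the symmetric positive definite square root of A *)
  spd B -> B *m B = A ->
  qform (invmx A) x0 = 1 ->
  let y0 := invmx B *m x0 in
  (* bound: every inscribed parallelepiped having x0 as a vertex *)
  (forall V : 'M[R]_n,
     row_free V^T -> inscribed A V ->
     (exists e : 'I_n -> bool, vertex V e = x0) ->
     edge_length V <= 2 ^+ n * Num.sqrt (\tr A))
  /\
  (* equality case, signs chosen so that x0 = 1/2 sum_i v_i *)
  (forall (V U : 'M[R]_n) (lambda : 'I_n -> R),
     row_free V^T -> inscribed A V ->
     x0 = 2^-1 *: \sum_i col i V ->
     orthogonal_mx U ->
     (forall i, 0 < lambda i) ->
     (forall i, col i V = lambda i *: (B *m col i U)) ->
     let z := U^T *m y0 in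
     edge_length V = 2 ^+ n * Num.sqrt (\tr A) <->
     ((forall i, (U^T *m A *m U) i i = \tr A * z i 0 ^+ 2) /\
      (forall i, lambda i = 2 * z i 0))).
Proof.
move=> n_ge2 A_spd B_spd B_sq _ y0.
have n_gt0 : (0 < n)%N by exact: ltnW.
have trA_gt0 := spd_tr_gt0 n_gt0 A_spd.
split=> [V V_free V_ins _ | V U l _ V_ins x0E U_orth l_gt0 V_col z].
  have [U [l [U_orth l_ge0 l_sq V_col]]] := inscribed_frame B_spd B_sq V_free V_ins.
  exact: (edge_length_frame_bound B_spd B_sq n_gt0 trA_gt0 U_orth l_ge0 l_sq V_col).1.
have l_ge0 i : 0 <= l i by exact: ltW.
have zE i : z i 0 = l i / 2.
  by rewrite /z /y0 x0E (frame_coords_half_sum B_spd U_orth V_col) !mxE mulrC.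
have l_sq := inscribed_frame_sum_sq B_spd B_sq V_ins U_orth l_ge0 V_col.
rewrite (edge_length_frame_bound B_spd B_sq n_gt0 trA_gt0 U_orth l_ge0 l_sq V_col).2.
split=> [diagE | [diagE _] i]; last by rewrite diagE zE.
by split=> i; rewrite zE; [exact: diagE | field].
Qed.
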